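(* Let $S_1,\dots,S_N$ be pairwise disjoint finite sets of variables, $S=\bigcup_iS_i$, and $\mu\in\mathcal{D}(\mathrm{Mem}[S])$. Then $S_1,\dots,S_N$ are mutually independent in $\mu$, i.e. $\mu(x)=\prod_{i=1}^N\pi_{S_i}\mu(p_{S_i}x)$ for all $x\in\mathrm{Mem}[S]$, if and only if for every family of functions $f_i:\mathrm{Mem}[S_i]\to[0,\infty)$ ($1\le i\le N$) that are all monotone or all antitone, $\mathbb{E}_{x\sim\mu}[\prod_{i}f_i(p_{S_i}x)]=\prod_i\mathbb{E}_{x\sim\mu}[f_i(p_{S_i}x)]$.
   Context: Values are real numbers; for finite $S$, $\mathrm{Mem}[S]$ is the set of maps $S\to\mathbb{R}$ with the pointwise order; $p_A$ denotes restriction to $A$; $\mathcal{D}(\cdot)$ denotes countably supported probability distributions; $\pi_A\mu$ is the marginal of $\mu$ on $A$. Monotone means non-decreasing and antitone means non-increasing in the pointwise order. *)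

From HB Require Import structures.
From mathcomp Require Import all_boot all_order all_algebra.
From mathcomp Require Import all_classical all_reals all_analysis.
Set Implicit Arguments. Unset Strict Implicit. Unset Printing Implicit Defensive.
Import Order.TTheory GRing.Theory Num.Theory.
Local Open Scope classical_set_scope.
Local Open Scope ring_scope.

Section Defs.
Variables (R : realType) (V : finType).

Definition MemS (A : {set V}) : Type := {v : V | v \in A} -> R.

Definition mem_le (A : {set V}) (m m' : MemS A) : Prop := forall v, m v <= m' v.
Definition monotoneM (A : {set V}) (f : MemS A -> R) : Prop :=
  forall m m', mem_le m m' -> f m <= f m'.
Definition antitoneM (A : {set V}) (f : MemS A -> R) : Prop :=
  forall m m', mem_le m m' -> f m' <= f m.

(* restriction p_A of a memory on all variables V (= S) to A *)
Definition restr (A : {set V}) (x : V -> R) : MemS A := fun v => x (sval v).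
Arguments restr : clear implicits.

Definition is_distr (mu : (V -> R) -> R) : Prop :=
  (forall x, 0 <= mu x) /\ countable [set x | mu x != 0] /\
  (\esum_(x in [set: V -> R]) (mu x)%:E = 1)%E.

Definition marg (A : {set V}) (mu : (V -> R) -> R) (y : MemS A) : \bar R :=
  \esum_(x in [set x | restr A x = y]) (mu x)%:E.

Definition expect (mu : (V -> R) -> R) (g : (V -> R) -> \bar R) : \bar R :=
  \esum_(x in [set: V -> R]) ((mu x)%:E * g x)%E.

End Defs.
Arguments restr {R V} A x.
Arguments marg {R V} A mu y.
Arguments MemS R {V} A.

From HB Require Import structures.
From mathcomp Require Import all_boot all_order all_algebra.
From mathcomp Require Import all_classical all_reals all_analysis.
Import Order.TTheory GRing.Theory Num.Theory.
Local Open Scope ring_scope.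

(* Independence gives the factorization for all nonnegative f at once, by
   splitting a sum over Mem[S] into a product of sums over the Mem[S_i].
   Conversely, fix x and let each A_i be one of {x_i}, {m | x_i <= m} or
   {m | x_i <= m, m <> x_i}.  When no A_i is a singleton all indicators 1_{A_i}
   are monotone, so their product factorizes; since
   1_{x_i} = 1_{x_i <= _} - 1_{x_i < _} and expectation is linear in each
   factor, factorization follows by induction on the number of singletons.
   With all A_i singletons it reads mu x = prod_i pi_{S_i}mu x_i. *)

Section esum_scale.
Local Open Scope classical_set_scope.
Local Open Scope ereal_scope.
Context {R : realType} {T : choiceType}.

Lemma esumZl (I : set T) (a : T -> \bar R) (c : \bar R) :
  0 <= c -> (forall i, 0 <= a i) ->
  \esum_(i in I) (c * a i) = c * \esum_(i in I) a i.
Proof.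
move=> c0 a0.
have esum_ge_point (b : T -> \bar R) i : I i -> b i <= \esum_(j in I) b j.
  move=> Ii; apply: esum_ge; exists [set i]; last by rewrite fsbig_set1.
  by split; [exact: finite_set1|move=> ? ->].
case: c c0 => [r| |//] c0.
- rewrite /esum -ereal_supZl //; last first.
    by apply/set0P; exists 0; exists set0; [exact: fsets_set0|rewrite fsbig_set0].
  congr ereal_sup; apply/seteqP; split=> x /=.
    by move=> [A IA <-]; exists (\sum_(i \in A) a i); [exists A|rewrite ge0_mule_fsumr].
  by move=> [y [A IA <-] <-]; exists A => //; rewrite ge0_mule_fsumr.
- have [sum0|sum_neq0] := eqVneq (\esum_(i in I) a i) 0.
    rewrite sum0 mule0 esum1// => i Ii.
    suff -> : a i = 0 by rewrite mule0.
    by apply/le_anti; rewrite a0 andbT -sum0 esum_ge_point.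
  have [i [Ii ai_neq0]] : exists i, I i /\ a i != 0.
    move: sum_neq0; apply: contraNP => none; apply/eqP; apply: esum1 => i Ii.
    by apply: contrapT => /eqP ai; apply: none; exists i.
  rewrite gt0_mulye ?lt0e ?sum_neq0 ?esum_ge0//; apply/eqP; rewrite eq_le leey /=.
  apply: le_trans (esum_ge_point _ i Ii).
  by rewrite gt0_mulye// lt0e ai_neq0 a0.
Qed.

Lemma esumZr (I : set T) (a : T -> \bar R) (c : \bar R) :
  0 <= c -> (forall i, 0 <= a i) ->
  \esum_(i in I) (a i * c) = (\esum_(i in I) a i) * c.
Proof.
by move=> c0 a0; rewrite [RHS]muleC -esumZl//; apply: eq_esum => i _; rewrite muleC.
Qed.

End esum_scale.

Section expectation.
Local Open Scope classical_set_scope.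
Local Open Scope ereal_scope.
Context {R : realType} {V : finType} (mu : (V -> R) -> R).
Hypothesis mu_ge0 : forall x, (0 <= mu x)%R.

Lemma eq_expect (a b : (V -> R) -> \bar R) : a =1 b -> expect mu a = expect mu b.
Proof. by move=> /boolp.funext ->. Qed.

Lemma expect_ge0 (a : (V -> R) -> R) : (forall y, 0 <= a y)%R ->
  0 <= expect mu (fun y => (a y)%:E).
Proof. by move=> a_ge0; apply: esum_ge0 => y _; rewrite mule_ge0 // lee_fin. Qed.

Lemma expectD (a b : (V -> R) -> R) :
  (forall y, 0 <= a y)%R -> (forall y, 0 <= b y)%R ->
  expect mu (fun y => (a y + b y)%:E) =
  expect mu (fun y => (a y)%:E) + expect mu (fun y => (b y)%:E).
Proof.
move=> a_ge0 b_ge0; rewrite /expect -esumD => [|y _|y _]; last 2 first.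
- by rewrite mule_ge0 // lee_fin.
- by rewrite mule_ge0 // lee_fin.
by apply: eq_esum => y _; rewrite EFinD ge0_muleDr // lee_fin.
Qed.

Lemma expect_indic (A : set (V -> R)) :
  expect mu (fun y => (\1_A y)%:E) = \esum_(y in A) (mu y)%:E.
Proof.
rewrite /expect [RHS]esum_mkcond; apply: eq_esum => y _; rewrite indicE.
by have [Ay|nAy] := boolP (y \in A); rewrite ?mule1 ?mule0.
Qed.

Lemma esum_restr_marg (A : {set V}) (f : MemS R A -> \bar R) :
  (forall z, 0 <= f z) ->
  \esum_(y in [set: V -> R]) ((mu y)%:E * f (restr A y)) =
  \esum_(z in [set: MemS R A]) (marg A mu z * f z).
Proof.
move=> f_ge0; transitivity (\esum_(z in [set: MemS R A])
    \esum_(y in [set y | restr A y = z]) ((mu y)%:E * f z)); last first.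
  by apply: eq_esum => z _; rewrite esumZr.
rewrite esum_esum; last by move=> z y _ _; rewrite mule_ge0// lee_fin.
rewrite (reindex_esum [set: V -> R] _ (fun y => (restr A y, y))) //.
split=> [y _ //|y y' _ _ [] //|[z y] /= [_ <-]]; by exists y.
Qed.

Hypothesis mu1 : \esum_(x in [set: V -> R]) (mu x)%:E = 1.

Lemma expect_fin_num (a : (V -> R) -> R) :
  (forall y, 0 <= a y <= 1)%R -> expect mu (fun y => (a y)%:E) \is a fin_num.
Proof.
move=> a01; have a_ge0 y : (0 <= a y)%R by case/andP: (a01 y).
rewrite ge0_fin_numE ?expect_ge0 //; apply: le_lt_trans (ltry 1%R).
rewrite -mu1; apply: le_esum => y _.
by rewrite -EFinM lee_fin ler_piMr //; case/andP: (a01 y).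
Qed.

End expectation.

Section upper_sets.
Local Open Scope classical_set_scope.
Context {R : realType} {V : finType} {A : {set V}}.
Implicit Types (a m : MemS R A) (U : set (MemS R A)).

Definition upper_set a : set (MemS R A) := [set m | mem_le a m].
Definition strict_upper_set a : set (MemS R A) := [set m | mem_le a m /\ m <> a].
Definition up_closed U := forall m m' : MemS R A, mem_le m m' -> U m -> U m'.

Lemma mem_le_trans (m1 m2 m3 : MemS R A) :
  mem_le m1 m2 -> mem_le m2 m3 -> mem_le m1 m3.
Proof. by move=> le12 le23 v; exact: le_trans (le12 v) (le23 v). Qed.

Lemma mem_le_anti (m m' : MemS R A) : mem_le m m' -> mem_le m' m -> m = m'.
Proof.
by move=> le1 le2; apply: boolp.funext => v; apply/le_anti; rewrite le1 le2.
Qed.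

Lemma up_closed_upper_set a : up_closed (upper_set a).
Proof. by move=> m m' le_mm' /mem_le_trans; apply. Qed.

Lemma up_closed_strict_upper_set a : up_closed (strict_upper_set a).
Proof.
move=> m m' le_mm' [le_am neq_ma]; split; first exact: mem_le_trans le_mm'.
by move=> eq_m'a; apply: neq_ma; apply: mem_le_anti => //; rewrite -eq_m'a.
Qed.

Lemma indic01 (T : Type) (B : set T) (t : T) : 0 <= (\1_B t : R) <= 1.
Proof. by rewrite indicE ler0n lern1 leq_b1. Qed.

Lemma monotoneM_indic U : up_closed U -> monotoneM (\1_U : MemS R A -> R).
Proof.
move=> U_up m m' le_mm'; rewrite !indicE.
have [Um|] := boolP (m \in U); last by rewrite ler0n.
by rewrite (mem_set (U_up _ _ le_mm' (set_mem Um))).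
Qed.

Lemma indic_upper_set a m :
  \1_(upper_set a) m = \1_[set a] m + \1_(strict_upper_set a) m :> R.
Proof.
rewrite !indicE; have [->|neq_ma] := eqVneq m a.
  have a_up : a \in upper_set a by apply/mem_set => v.
  by rewrite a_up mem_set ?memNset ?addr0 //; case.
rewrite [m \in [set a]]memNset ?add0r; last exact/eqP.
have [/set_mem le_am|/negP not_up] := boolP (m \in upper_set a).
  by rewrite mem_set //; split=> //; exact/eqP.
by rewrite memNset // => -[le_am _]; apply: not_up; exact: mem_set.
Qed.

End upper_sets.

Section partition.
Context {R : realType} {V : finType} {N : nat} (S : 'I_N -> {set V}).
Hypothesis S_disj : forall i j : 'I_N, i != j -> [disjoint S i & S j].
Hypothesis S_cover : \bigcup_(i < N) S i = [set: V].

Lemma restr_cover_inj (x y : V -> R) :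
  (forall i, restr (S i) y = restr (S i) x) -> y = x.
Proof.
move=> eq_restr; apply: boolp.funext => v.
have : v \in \bigcup_(i < N) S i by rewrite S_cover inE.
case/bigcupP => i _ vSi.
exact: (congr1 (fun m : MemS R (S i) => m (exist _ v vSi)) (eq_restr i)).
Qed.

Definition overwrite {j : 'I_N} (a : V -> R) (z : MemS R (S j)) : V -> R :=
  fun v => if insub v is Some w then z w else a v.

Lemma restr_overwrite {j} a (z : MemS R (S j)) : restr (S j) (overwrite a z) = z.
Proof.
apply: boolp.funext => w; rewrite /restr /overwrite.
case: insubP => [u _ Hu|]; first by congr z; apply: val_inj.
by rewrite (svalP w).
Qed.

Lemma restr_overwrite_other i j a (z : MemS R (S j)) :
  i != j -> restr (S i) (overwrite a z) = restr (S i) a.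
Proof.
move=> ij; apply: boolp.funext => w; rewrite /restr /overwrite.
case: insubP => [u vSj _|//].
by move: (disjointFr (S_disj _ _ ij) (svalP w)); rewrite vSj.
Qed.

(* Memories supported on the first k blocks; sums over Mem[S] are split off one
   block at a time along k. *)
Definition vanish_off_blocks (k : nat) : set (V -> R) :=
  [set y | forall v, (forall i : 'I_N, (i < k)%N -> v \notin S i) -> y v = 0]%classic.

Lemma vanish_off_blocks0 : vanish_off_blocks 0 = [set fun=> 0]%classic.
Proof.
apply/seteqP; split => y /=; last by move=> -> v.
by move=> y0; apply: boolp.funext => v; apply: y0.
Qed.

Lemma vanish_off_blocksN : vanish_off_blocks N = [set: V -> R]%classic.
Proof.
apply/seteqP; split => // y _ v notin_S.
have : v \in \bigcup_(i < N) S i by rewrite S_cover inE.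
by case/bigcupP => i _; rewrite (negPf (notin_S i (ltn_ord i))).
Qed.

Lemma overwrite_bij {k} (k_lt : (k < N)%N) :
  set_bij (vanish_off_blocks k `*` [set: MemS R (S (Ordinal k_lt))])%classic
    (vanish_off_blocks k.+1) (fun p => overwrite p.1 p.2).
Proof.
set j := Ordinal k_lt; split.
- move=> [a z] [/= a0 _] v notin_S; rewrite /overwrite.
  case: insubP => [u vSj _|vSj].
    by move: (notin_S j (ltnSn k)); rewrite vSj.
  by apply: a0 => i ik; apply: notin_S; exact: ltnW.
- move=> [a z] [a' z'] /set_mem [/= a0 _] /set_mem [/= a'0 _] eq_ov.
  have eq_z : z = z'.
    by rewrite -(restr_overwrite a z) -(restr_overwrite a' z') eq_ov.
  congr pair => //; apply: boolp.funext => v.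
  have [vSj|vSj] := boolP (v \in S j).
    have off_k (i : 'I_N) : (i < k)%N -> v \notin S i.
      move=> ik; have ij : i != j by rewrite -val_eqE /= neq_ltn ik.
      by apply: contraTN vSj => vSi; rewrite (disjointFr (S_disj _ _ ij) vSi).
    by rewrite a0 // a'0.
  have := congr1 (fun f => f v) eq_ov; rewrite /overwrite /=.
  by case: insubP => [u vSj' _|_ //]; rewrite vSj' in vSj.
- move=> y /= y0.
  exists ((fun v => if v \in S j then 0%R else y v), restr (S j) y).
    split => //= v off_k; case: ifPn => // vSj; apply: y0 => i.
    rewrite ltnS leq_eqVlt => /orP[/eqP ik|]; last exact: off_k.
    by have -> : i = j by apply: val_inj.
  apply: boolp.funext => v; rewrite /overwrite /=.
  case: insubP => [u _ <-|vSj] //; by rewrite (negPf vSj).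
Qed.

Section product.
Local Open Scope ereal_scope.
Variable h : forall i, MemS R (S i) -> \bar R.
Hypothesis h_ge0 : forall i z, 0 <= h i z.

Let prod_lt (k : nat) (y : V -> R) :=
  \prod_(i < N | (i < k)%N) h i (restr (S i) y).

Lemma prod_lt_ge0 k y : 0 <= prod_lt k y.
Proof. exact: prode_ge0. Qed.

Lemma prod_ord_ltS (F : 'I_N -> \bar R) k (k_lt : (k < N)%N) :
  \prod_(i < N | (i < k.+1)%N) F i =
  F (Ordinal k_lt) * \prod_(i < N | (i < k)%N) F i.
Proof.
rewrite (bigD1 (Ordinal k_lt)) //=; congr (_ * _); apply: eq_bigl => i.
by rewrite ltnS leq_eqVlt -val_eqE /=; case: ltngtP.
Qed.

Lemma esum_prod_restr_lt k : (k <= N)%N ->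
  \esum_(y in vanish_off_blocks k) prod_lt k y =
  \prod_(i < N | (i < k)%N) \esum_(z in [set: MemS R (S i)]%classic) h i z.
Proof.
elim: k => [_|k IH k_lt].
  by rewrite vanish_off_blocks0 esum_set1 /prod_lt ?big_pred0.
set j := Ordinal k_lt.
rewrite prod_ord_ltS -IH; last exact: ltnW.
rewrite (reindex_esum _ _ _ _ (overwrite_bij k_lt)).
transitivity (\esum_(a in vanish_off_blocks k)
    \esum_(z in [set: MemS R (S j)]%classic) (h j z * prod_lt k a)).
  rewrite esum_esum /=; last by move=> a z _ _; rewrite mule_ge0 ?prod_lt_ge0.
  apply: eq_esum => -[a z] _ /=; rewrite /prod_lt prod_ord_ltS restr_overwrite.
  congr (_ * _); apply: eq_bigr => i ik; rewrite restr_overwrite_other //.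
  by rewrite -val_eqE /= neq_ltn ik.
rewrite -esumZl; [|by apply: esum_ge0 => z _|exact: prod_lt_ge0].
by apply: eq_esum => a _; rewrite esumZr ?prod_lt_ge0.
Qed.

Lemma esum_prod_restr :
  \esum_(y in [set: V -> R]%classic) \prod_(i < N) h i (restr (S i) y) =
  \prod_(i < N) \esum_(z in [set: MemS R (S i)]%classic) h i z.
Proof.
have all_lt (F : 'I_N -> \bar R) :
    \prod_(i < N) F i = \prod_(i < N | (i < N)%N) F i.
  by apply: eq_bigl => i; rewrite ltn_ord.
rewrite all_lt -esum_prod_restr_lt // vanish_off_blocksN.
by apply: eq_esum => y _; rewrite all_lt.
Qed.

End product.

End partition.

Section independence.
Local Open Scope ereal_scope.
Context {R : realType} {V : finType} {N : nat} (S : 'I_N -> {set V}).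
Hypothesis S_disj : forall i j : 'I_N, i != j -> [disjoint S i & S j].
Hypothesis S_cover : \bigcup_(i < N) S i = [set: V].
Variable mu : (V -> R) -> R.
Hypothesis mu_ge0 : forall x, (0 <= mu x)%R.

Definition independent :=
  forall x : V -> R, (mu x)%:E = \prod_(i < N) marg (S i) mu (restr (S i) x).

Definition factorizes (f : forall i, MemS R (S i) -> R) :=
  expect mu (fun y => (\prod_(i < N) f i (restr (S i) y))%:E) =
  \prod_(i < N) expect mu (fun y => (f i (restr (S i) y))%:E).

Lemma independent_factorizes f : independent ->
  (forall i m, (0 <= f i m)%R) -> factorizes f.
Proof.
move=> mu_indep f_ge0; rewrite /factorizes /expect.
transitivity (\esum_(y in [set: V -> R]%classic)
    \prod_(i < N) (marg (S i) mu (restr (S i) y) * (f i (restr (S i) y))%:E)).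
  by apply: eq_esum => y _; rewrite mu_indep -prodEFin -big_split.
rewrite (esum_prod_restr _ S_disj S_cover
  (fun i z => marg (S i) mu z * (f i z)%:E)) => [|i z]; last first.
  by rewrite mule_ge0 ?lee_fin // esum_ge0 // => y _; rewrite lee_fin.
apply: eq_bigr => i _.
by rewrite (esum_restr_marg _ mu_ge0 _ (fun z => (f i z)%:E)) // => z; rewrite lee_fin.
Qed.

Hypothesis mu1 : \esum_(x in [set: V -> R]%classic) (mu x)%:E = 1.

(* The bound [g <= 1] makes E[prod_i g_i] finite, so that it can be cancelled. *)
Lemma factorizes_sub (j : 'I_N) (f g h : forall i, MemS R (S i) -> R) :
  (forall i m, (0 <= h i m)%R) -> (forall i m, (0 <= g i m <= 1)%R) ->
  (forall i, i != j -> f i =1 h i /\ g i =1 h i) ->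
  (forall m, f j m = h j m + g j m)%R ->
  factorizes f -> factorizes g -> factorizes h.
Proof.
move=> h_ge0 g01 off_j at_j.
have g_ge0 i m : (0 <= g i m)%R by case/andP: (g01 i m).
have f_ge0 i m : (0 <= f i m)%R.
  have [ij|/off_j[-> _]] := eqVneq i j; last exact: h_ge0.
  by move: m; rewrite ij => m; rewrite at_j addr_ge0.
pose E F i := expect mu (fun y => (F i (restr (S i) y))%:E).
pose P F := expect mu (fun y => (\prod_(i < N) F i (restr (S i) y))%:E).
pose Q := \prod_(i < N | i != j) E h i.
have E_ge0 F i : (forall i m, 0 <= F i m)%R -> 0 <= E F i.
  by move=> F_ge0; apply: expect_ge0.
have split_j (F : 'I_N -> \bar R) :
    \prod_(i < N) F i = F j * \prod_(i < N | i != j) F i.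
  by rewrite (bigD1 j).
have Q_f : \prod_(i < N | i != j) E f i = Q.
  by apply: eq_bigr => i /off_j[eq_fh _]; apply: eq_expect => y; rewrite eq_fh.
have Q_g : \prod_(i < N | i != j) E g i = Q.
  by apply: eq_bigr => i /off_j[_ eq_gh]; apply: eq_expect => y; rewrite eq_gh.
have E_fj : E f j = E h j + E g j.
  by rewrite -expectD //; apply: eq_expect => y; rewrite at_j.
have P_f : P f = P h + P g.
  rewrite -(expectD _ mu_ge0) => [|y|y]; try exact: prodr_ge0.
  apply: eq_expect => y; congr (_%:E); rewrite (bigD1 j) //= at_j mulrDl.
  rewrite [in RHS](bigD1 j) // [X in (_ = _ + X)%R](bigD1 j) //=.
  congr (_ * _ + _ * _)%R.
    by apply: eq_bigr => i /off_j[].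
  by apply: eq_bigr => i /off_j[eq_fh eq_gh]; rewrite eq_fh eq_gh.
have P_g_fin : P g \is a fin_num.
  apply: (expect_fin_num _ mu_ge0 mu1) => y; by rewrite prodr_ge0 //= prodr_ile1.
rewrite /factorizes -/(P f) -/(P g) -/(P h) !split_j -/(E f j) -/(E g j).
rewrite Q_f Q_g E_fj ge0_muleDl ?E_ge0 // P_f => fact_f fact_g.
by rewrite -(addeK (P h) P_g_fin) fact_f fact_g addeK // -fact_g.
Qed.

Section cells.
Variable x : V -> R.

Definition block_cell (E : {set 'I_N}) (c : 'I_N -> bool) (i : 'I_N) :
    set (MemS R (S i)) :=
  if i \in E then [set restr (S i) x]%classic
  else if c i then upper_set (restr (S i) x) else strict_upper_set (restr (S i) x).

Lemma factorizes_block_cells :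
  (forall f, (forall i m, (0 <= f i m)%R) ->
     (forall i, monotoneM (f i)) -> factorizes f) ->
  forall E c, factorizes (fun i => \1_(block_cell E c i)).
Proof.
move=> fact_mono E c; move: {2}#|E| (erefl #|E|) => n.
elim: n E c => [|n IH] E c cardE.
  apply: fact_mono => [i m|i].
    by have /andP[] := @indic01 R _ (block_cell E c i) m.
  rewrite /block_cell (cards0_eq cardE) inE; apply: monotoneM_indic.
  by case: (c i); [exact: up_closed_upper_set|exact: up_closed_strict_upper_set].
have [j jE] : exists j, j \in E by apply/set0Pn; rewrite -card_gt0 cardE.
pose c_ b i := if i == j then b else c i.
have cardEj : #|E :\ j| = n by move: cardE; rewrite (cardsD1 j) jE => -[].
apply: (@factorizes_sub j (fun i => \1_(block_cell (E :\ j) (c_ true) i))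
    (fun i => \1_(block_cell (E :\ j) (c_ false) i))) => [i m|i m|i ij|m||].
- by have /andP[] := @indic01 R _ (block_cell E c i) m.
- exact: indic01.
- by rewrite /block_cell /c_ in_setD1 (negPf ij).
- by rewrite /block_cell /c_ setD11 jE eqxx; exact: indic_upper_set.
- exact: IH cardEj.
- exact: IH cardEj.
Qed.

Lemma prod_indic_restr (y : V -> R) :
  (\prod_(i < N) \1_[set restr (S i) x]%classic (restr (S i) y)
   = \1_[set x]%classic y :> R)%R.
Proof.
rewrite indicE; have [<-|neq_yx] := eqVneq y x.
  by rewrite mem_set // big1 // => i _; rewrite indicE mem_set.
rewrite memNset; last exact/eqP.
have [i neq_i] : exists i, restr (S i) y <> restr (S i) x.
  apply: contrapT => all_eq; move/eqP: neq_yx; apply.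
  apply: (restr_cover_inj _ S_cover) => i.
  by apply: contrapT => neq_i; apply: all_eq; exists i.
by rewrite (bigD1 i) //= indicE memNset ?mul0r.
Qed.

Lemma factorizes_points_independent :
  factorizes (fun i => \1_(block_cell [set: 'I_N] xpredT i)) ->
  (mu x)%:E = \prod_(i < N) marg (S i) mu (restr (S i) x).
Proof.
have cellT i : block_cell [set: 'I_N] xpredT i = [set restr (S i) x]%classic.
  by rewrite /block_cell inE.
have expect_prod_cells :
    expect mu (fun y => (\prod_(i < N)
      \1_(block_cell [set: 'I_N] xpredT i) (restr (S i) y))%:E) = (mu x)%:E.
  transitivity (\esum_(y in [set x]%classic) (mu y)%:E).
    rewrite -expect_indic; apply: eq_expect => y; rewrite -prod_indic_restr.
    by congr (_%:E); apply: eq_bigr => i _; rewrite cellT.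
  by rewrite esum_set1 // lee_fin.
rewrite /factorizes expect_prod_cells => ->.
by apply: eq_bigr => i _; rewrite cellT; exact: expect_indic.
Qed.

End cells.

End independence.

Theorem mainTheorem15 (R : realType) (V : finType) (N : nat)
  (S : 'I_N -> {set V})
  (Hdisj : forall i j : 'I_N, i != j -> [disjoint S i & S j])
  (Hcover : \bigcup_(i < N) S i = [set: V])
  (mu : (V -> R) -> R) (Hmu : is_distr mu) :
  (forall x : V -> R,
     ((mu x)%:E = \prod_(i < N) marg (S i) mu (restr (S i) x))%E)
  <->
  (forall f : forall i : 'I_N, MemS R (S i) -> R,
     (forall i m, 0 <= f i m) ->
     ((forall i, monotoneM (f i)) \/ (forall i, antitoneM (f i))) ->
     (expect mu (fun x => (\prod_(i < N) f i (restr (S i) x))%:E)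
      = \prod_(i < N) expect mu (fun x => (f i (restr (S i) x))%:E))%E).
Proof.
case: Hmu => mu_ge0 [_ mu1]; split=> [indep f f_ge0 _|fact x].
  exact: independent_factorizes.
apply: (factorizes_points_independent _ Hcover _ mu_ge0).
apply: (factorizes_block_cells _ _ mu_ge0 mu1) => f f_ge0 f_mono.
by apply: fact => //; left.
Qed.
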